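(* Let $A_0,A_1,A_2\in\mathbb{R}[x]$ with $A_2\not\equiv0$, let $I$ be an open interval on which $A_2$ has no zeros, and let $g_0,g_1\in\mathbb{R}[x,y]$ with $g_1\not\equiv0$ and $\partial_y(g_0/g_1)\not\equiv0$. Let $\mathcal{X}=P\partial_x+Q\partial_y$ with $$P=A_2\left(g_0\,\partial_y g_1-g_1\,\partial_y g_0\right),\qquad Q=A_0g_1^2+A_1g_1g_0+A_2g_0^2+A_2\left(g_1\,\partial_x g_0-g_0\,\partial_x g_1\right).$$ Let $\{w_1,w_2\}$ be a fundamental system of solutions on $I$ of $A_2w''+A_1w'+A_0w=0$ and define $f_i(x,y)=g_1(x,y)w_i'(x)-g_0(x,y)w_i(x)$, $i=1,2$. Then on the open set $U=\{(x,y)\in I\times\mathbb{R}: f_2(x,y)\neq0\}$ the function $$H=\frac{f_1}{f_2}=\frac{g_1 w_1'-g_0w_1}{g_1w_2'-g_0w_2}$$ is a first integral of $\mathcal{X}$.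
   Context: A first integral of $\mathcal{X}=P\partial_x+Q\partial_y$ on an open set $U$ is a $C^1$ function $H:U\to\mathbb{R}$ with $P\,\partial_xH+Q\,\partial_yH=0$ on $U$ which is not constant on any nonempty open subset of $U$. *)

From HB Require Import structures.
From mathcomp Require Import all_boot all_order all_algebra polyXY.
From mathcomp Require Import all_classical all_reals all_analysis.
Set Implicit Arguments. Unset Strict Implicit. Unset Printing Implicit Defensive.
Import Order.TTheory GRing.Theory Num.Theory.
Import numFieldNormedType.Exports.
Local Open Scope classical_set_scope.
Local Open Scope ring_scope.

(* Bivariate polynomials g in R[x,y] are represented, following polyXY, as
   {poly {poly R}} whose outer variable is x and whose coefficients are
   polynomials in y; g.[x, y] is the evaluation at (x,y). *)
Section Defs.
Variable R : realType.

Definition dX (g : {poly {poly R}}) : {poly {poly R}} := deriv g.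
Definition dY (g : {poly {poly R}}) : {poly {poly R}} := map_poly (@deriv R) g.
Definition liftX (A : {poly R}) : {poly {poly R}} := map_poly polyC A.

Definition Pfield (A2 : {poly R}) (g0 g1 : {poly {poly R}}) : {poly {poly R}} :=
  liftX A2 * (g0 * dY g1 - g1 * dY g0).
Definition Qfield (A0 A1 A2 : {poly R}) (g0 g1 : {poly {poly R}}) : {poly {poly R}} :=
  liftX A0 * g1 ^+ 2 + liftX A1 * g1 * g0 + liftX A2 * g0 ^+ 2
  + liftX A2 * (g1 * dX g0 - g0 * dX g1).

Definition pdx (H : R * R -> R) (p : R * R) : R := derive1 (fun t => H (t, p.2)) p.1.
Definition pdy (H : R * R -> R) (p : R * R) : R := derive1 (fun t => H (p.1, t)) p.2.

Definition C1_on (U : set (R * R)) (H : R * R -> R) : Prop :=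
  forall p, U p ->
    [/\ derivable (fun t => H (t, p.2)) p.1 1,
        derivable (fun t => H (p.1, t)) p.2 1,
        {for p, continuous (pdx H)} &
        {for p, continuous (pdy H)}].

Definition first_integral (P Q : R * R -> R) (U : set (R * R)) (H : R * R -> R) : Prop :=
  [/\ C1_on U H,
      (forall p, U p -> P p * pdx H p + Q p * pdy H p = 0) &
      (forall V : set (R * R), open V -> V `<=` U -> V !=set0 ->
         exists p q, [/\ V p, V q & H p != H q])].

Definition ode_solution (A0 A1 A2 : {poly R}) (I : set R) (w : R -> R) : Prop :=
  forall x, I x ->
    [/\ derivable w x 1, derivable (derive1 w) x 1 &
        A2.[x] * derive1 (derive1 w) x + A1.[x] * derive1 w x + A0.[x] * w x = 0].

Definition fundamental_system (A0 A1 A2 : {poly R}) (I : set R) (w1 w2 : R -> R) : Prop :=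
  [/\ ode_solution A0 A1 A2 I w1, ode_solution A0 A1 A2 I w2 &
      forall c1 c2 : R, (forall x, I x -> c1 * w1 x + c2 * w2 x = 0) ->
        c1 = 0 /\ c2 = 0].

End Defs.

From HB Require Import structures.
From mathcomp Require Import all_boot all_order all_algebra polyXY.
From mathcomp Require Import all_classical all_reals all_analysis.
From mathcomp Require Import ring lra.
Set Implicit Arguments. Unset Strict Implicit. Unset Printing Implicit Defensive.
Import Order.TTheory GRing.Theory Num.Theory.
Import numFieldNormedType.Exports.
Local Open Scope classical_set_scope.
Local Open Scope ring_scope.

(* H = f1/f2 is C^1 wherever f2 <> 0, and X(H) = 0 is a direct computation once
   w_i'' is eliminated with the ODE.  The content is that H is not locally
   constant: if H = c on an open set, then w = w1 - c w2 solves the ODE and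
   g1 w' - g0 w vanishes on a box.  For fixed x this is a polynomial identity in
   y; together with its y-derivative it gives D(x,.) w(x) = D(x,.) w'(x) = 0,
   where D = g1 d_y g0 - g0 d_y g1.  Uniqueness for the linear ODE (a Gronwall
   estimate on w^2 + w'^2) and the independence of w1, w2 give
   (w(x), w'(x)) <> 0, so D(x,.) = 0 for all x in an interval, whence D = 0. *)

Section BivariatePolynomials.
Variable R : realType.
Implicit Types (g : {poly {poly R}}) (p : {poly R}).

Lemma hornerXYE g x y : g.[x, y] = (map_poly (horner_eval y) g).[x].
Proof.
have := horner_map (horner_eval y) g x%:P.
by rewrite /= horner_evalE hornerC => ->.
Qed.

Lemma horner_liftX p x : (liftX p).[x%:P] = (p.[x])%:P.
Proof. by rewrite /liftX horner_map. Qed.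

Lemma deriv_hornerC g x : (g.[x%:P])^`() = (dY g).[x%:P].
Proof.
elim/poly_ind: g => [|g c ih]; first by rewrite /dY map_poly0 !horner0 deriv0.
have -> : dY (g * 'X + c%:P) = dY g * 'X + (c^`())%:P.
  apply/polyP => i; rewrite /dY coefD coefMX coefC !coef_map_id0 ?deriv0 //.
  by rewrite coefD coefMX coefC; case: (i == 0%N); rewrite ?deriv0 ?add0r ?addr0.
by rewrite !hornerE derivD derivM -ih derivC mulr0 addr0.
Qed.

Lemma is_derive_hornerXY_x g x y :
  is_derive x (1 : R) (fun t => g.[t, y]) (dX g).[x, y].
Proof.
have -> : (fun t => g.[t, y]) = horner (map_poly (horner_eval y) g).
  by apply/funext => t; rewrite hornerXYE.
by rewrite hornerXYE /dX -deriv_map; exact: is_derive_poly.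
Qed.

Lemma continuous_hornerXY g : continuous (fun q : R * R => g.[q.1, q.2]).
Proof.
elim/poly_ind: g => [|g c ih].
  by under eq_fun do rewrite !horner0; exact: cst_continuous.
under eq_fun do rewrite !hornerE.
move=> q; apply: cvgD; first by apply: cvgM; [exact: ih | exact: cvg_fst].
by apply: (continuous_comp (f := snd) (g := horner c));
  [exact: cvg_snd | exact: continuous_horner].
Qed.

Lemma poly_eq0_on_ball p x0 e : 0 < e -> (forall y, `|y - x0| < e -> p.[y] = 0) -> p = 0.
Proof.
move=> e0 hp; apply/eqP/negP => /negP pn0.
pose d := e / (size p).+1%:R.
have d0 : 0 < d by rewrite divr_gt0 // ltr0n.
pose rs := [seq x0 + i%:R * d | i <- iota 0 (size p)].
have rs_uniq : uniq rs.
  rewrite map_inj_uniq ?iota_uniq // => i j /addrI /(mulIf (lt0r_neq0 d0)).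
  by move/eqP; rewrite eqr_nat => /eqP.
have rs_roots : all (root p) rs.
  apply/allP => y /mapP [i]; rewrite mem_iota add0n => /andP [_ hi] ->.
  apply/eqP/hp; rewrite addrC addKr ger0_norm ?mulr_ge0 ?ler0n ?ltW //.
  have -> : e = (size p).+1%:R * d by rewrite /d mulrC divfK // pnatr_eq0.
  by rewrite ltr_pM2r // ltr_nat ltnS ltnW.
by have := max_poly_roots pn0 rs_roots rs_uniq; rewrite size_map size_iota ltnn.
Qed.

Lemma polyXY_eq0_on_ball g x0 e :
  0 < e -> (forall x, `|x - x0| < e -> g.[x%:P] = 0) -> g = 0.
Proof.
move=> e0 hg; apply/eqP; rewrite -swapXY_eq0; apply/eqP/polyP => j.
rewrite coef0; apply: (poly_eq0_on_ball (x0 := x0) e0) => x hx.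
have := congr1 (fun q : {poly R} => q`_j) (hg x hx).
by rewrite horner_polyC coef_map /= coef0.
Qed.

Lemma wronskian_eq0_of_comb p0 p1 (u v : R) : (u != 0) || (v != 0) ->
  p1 * v%:P - p0 * u%:P = 0 -> p1 * p0^`() - p0 * p1^`() = 0.
Proof.
move=> uv hc.
have hd : p1^`() * v%:P - p0^`() * u%:P = 0.
  by rewrite -[RHS]deriv0 -hc derivB !derivM !derivC !mulr0 !addr0.
have Wu : (p1 * p0^`() - p0 * p1^`()) * u%:P = 0.
  transitivity (p1^`() * (p1 * v%:P - p0 * u%:P) - p1 * (p1^`() * v%:P - p0^`() * u%:P)).
    by ring.
  by rewrite hc hd !mulr0 subr0.
have Wv : (p1 * p0^`() - p0 * p1^`()) * v%:P = 0.
  transitivity (p0^`() * (p1 * v%:P - p0 * u%:P) - p0 * (p1^`() * v%:P - p0^`() * u%:P)).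
    by ring.
  by rewrite hc hd !mulr0 subr0.
case/orP: uv => [u0 | v0]; apply/eqP.
- by move/eqP: Wu; rewrite mulf_eq0 polyC_eq0 (negbTE u0) orbF.
- by move/eqP: Wv; rewrite mulf_eq0 polyC_eq0 (negbTE v0) orbF.
Qed.

Lemma wronskianY_eq0_of_comb g0 g1 (u v x y0 e : R) : 0 < e -> (u != 0) || (v != 0) ->
  (forall y, `|y - y0| < e -> g1.[x, y] * v - g0.[x, y] * u = 0) ->
  (g1 * dY g0 - g0 * dY g1).[x%:P] = 0.
Proof.
move=> e0 uv comb0.
have comb_eq0 : g1.[x%:P] * v%:P - g0.[x%:P] * u%:P = 0.
  apply: (poly_eq0_on_ball (x0 := y0) e0) => y hy.
  by rewrite hornerD hornerN !hornerM !hornerC; exact: comb0.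
by rewrite hornerD hornerN !hornerM -!deriv_hornerC (wronskian_eq0_of_comb uv comb_eq0).
Qed.

Definition lincombXY (h1 h0 : {poly {poly R}}) (u v : R -> R) (p : R * R) : R :=
  h1.[p.1, p.2] * u p.1 - h0.[p.1, p.2] * v p.1.

Lemma lincombXY_continuous h1 h0 (u v : R -> R) (p : R * R) :
  {for p.1, continuous u} -> {for p.1, continuous v} ->
  {for p, continuous (lincombXY h1 h0 u v)}.
Proof.
have comp_fst (f : R -> R) : {for p.1, continuous f} ->
    {for p, continuous (fun q : R * R => f q.1)}.
  by move=> fc; apply: (continuous_comp (f := fst) (g := f)); [exact: cvg_fst | exact: fc].
move=> uc vc; apply: cvgB; apply: cvgM; do ?[exact: continuous_hornerXY].
- exact: comp_fst.
- exact: comp_fst.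
Qed.

Lemma is_derive_lincombXY_x h1 h0 (u v du dv : R -> R) (x y : R) :
  is_derive x (1 : R) u (du x) -> is_derive x (1 : R) v (dv x) ->
  is_derive x (1 : R) (fun t => lincombXY h1 h0 u v (t, y))
    (lincombXY (dX h1) (dX h0) u v (x, y) + lincombXY h1 h0 du dv (x, y)).
Proof.
move=> ? ?; have := is_derive_hornerXY_x h1 x y; have := is_derive_hornerXY_x h0 x y.
by rewrite /lincombXY => ? ?; apply: trigger_derive; rewrite /GRing.scale /=; ring.
Qed.

Lemma is_derive_lincombXY_y h1 h0 (u v : R -> R) (x y : R) :
  is_derive y (1 : R) (fun t => lincombXY h1 h0 u v (x, t))
    (lincombXY (dY h1) (dY h0) u v (x, y)).
Proof.
by rewrite /lincombXY /=; apply: trigger_derive; rewrite /GRing.scale /= !deriv_hornerC; ring.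
Qed.
End BivariatePolynomials.

Section LinearODE.
Variable R : realType.

Lemma is_derive_expRM (c x : R) :
  is_derive x (1 : R) (fun y => expR (c * y)) (expR (c * x) * c).
Proof.
have hc : is_derive x (1 : R) ( *%R c) c.
  by apply: trigger_derive; rewrite /GRing.scale /= mulr1.
exact: (is_derive1_comp (f := expR) (g := *%R c)).
Qed.

Lemma expR_weighted_nonincreasing (E dE : R -> R) (c s t : R) : s <= t ->
  (forall x, s <= x <= t -> is_derive x (1 : R) E (dE x)) ->
  (forall x, s <= x <= t -> dE x + c * E x <= 0) ->
  E t * expR (c * t) <= E s * expR (c * s).
Proof.
move=> st dE_E dE_le.
have dF x : s <= x <= t -> is_derive x (1 : R) (fun y => E y * expR (c * y))
                                      ((dE x + c * E x) * expR (c * x)).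
  move=> hx; have := dE_E x hx; have := is_derive_expRM c x => ? ?.
  by apply: trigger_derive; rewrite /GRing.scale /=; ring.
have inner x : x \in `]s, t[ -> s <= x <= t.
  by rewrite in_itv /= => /andP[/ltW -> /ltW ->].
apply: (ler0_derive1_le_cc (f := fun y => E y * expR (c * y)) (a := s) (b := t)).
- by move=> x /inner /dF [].
- move=> x /inner hx; have := dF x hx => ?; rewrite derive1E derive_val.
  by rewrite pmulr_lle0 ?expR_gt0 // dE_le.
- apply: derivable_within_continuous => x; rewrite in_itv /= => hx.
  by have [] := dF x hx.
- by rewrite in_itv /= lexx st.
- by rewrite in_itv /= lexx st.
- exact: st.
Qed.

Lemma energy_zero_propagates (E dE : R -> R) (K s t : R) : s <= t ->
  (forall x, s <= x <= t -> is_derive x (1 : R) E (dE x)) ->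
  (forall x, s <= x <= t -> `|dE x| <= K * E x) ->
  (forall x, 0 <= E x) ->
  E s = 0 <-> E t = 0.
Proof.
move=> st dE_E dE_le E_ge0.
have dE_bnd x : s <= x <= t -> - (K * E x) <= dE x <= K * E x.
  by move=> hx; rewrite -ler_norml dE_le.
split=> E0; apply/eqP; rewrite eq_le E_ge0 andbT.
- suff : E t * expR (- K * t) <= E s * expR (- K * s).
    by rewrite E0 mul0r pmulr_lle0 ?expR_gt0.
  apply: expR_weighted_nonincreasing st dE_E _ => x hx.
  by have := dE_bnd x hx; lra.
- suff : - E t * expR (K * t) <= - E s * expR (K * s).
    by rewrite E0 oppr0 mul0r mulNr oppr_ge0 pmulr_lle0 ?expR_gt0.
  apply: (@expR_weighted_nonincreasing (fun y => - E y) (fun y => - dE y)) st _ _ => x hx.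
    by have := dE_E x hx => ?; exact: is_deriveN.
  by have := dE_bnd x hx; lra.
Qed.

(* The derivative of the energy [u^2 + v^2] along [w'' = - (al w' + be w)], with
   [u = w] and [v = w']. *)
Lemma ode2_energy_bound (al be u v M : R) : `|al| <= M -> `|be| <= M ->
  `|2 * u * v + 2 * v * - (al * v + be * u)| <= (1 + 3 * M) * (u * u + v * v).
Proof.
move=> al_le be_le.
have uu : u * u = `|u| * `|u| by rewrite -normrM ger0_norm // -expr2 sqr_ge0.
have vv : v * v = `|v| * `|v| by rewrite -normrM ger0_norm // -expr2 sqr_ge0.
have amgm : 2 * `|u| * `|v| <= `|u| * `|u| + `|v| * `|v|.
  by have := sqr_ge0 (`|u| - `|v|); rewrite expr2; lra.
have tri : `|2 * u * v + 2 * v * - (al * v + be * u)| <=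
    2 * `|u| * `|v| + (2 * `|al| * (`|v| * `|v|) + 2 * `|be| * (`|u| * `|v|)).
  have -> : 2 * u * v + 2 * v * - (al * v + be * u) =
      2 * u * v + (- (2 * al) * (v * v) + - (2 * be) * (u * v)) by ring.
  apply: le_trans (ler_normD _ _) _; apply: lerD; first by rewrite !normrM normr_nat.
  apply: le_trans (ler_normD _ _) _.
  by apply: lerD; rewrite !normrM normrN normrM normr_nat.
apply: le_trans tri _; rewrite uu vv.
have M_ge0 : 0 <= M by apply: le_trans al_le.
have uv_ge0 : 0 <= `|u| * `|v| by rewrite mulr_ge0.
have uu_ge0 : 0 <= `|u| * `|u| by rewrite mulr_ge0.
have vv_ge0 : 0 <= `|v| * `|v| by rewrite mulr_ge0.
have := ler_wpM2r vv_ge0 al_le; have := ler_wpM2r uv_ge0 be_le.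
have := ler_wpM2l M_ge0 amgm; have := mulr_ge0 M_ge0 uu_ge0; have := mulr_ge0 M_ge0 vv_ge0.
lra.
Qed.

Lemma ode2_zero_propagates (A0 A1 A2 : {poly R}) (u v z : R -> R) (s t : R) :
  s <= t ->
  (forall x, s <= x <= t ->
     [/\ is_derive x (1 : R) u (v x), is_derive x (1 : R) v (z x), A2.[x] != 0 &
         A2.[x] * z x + A1.[x] * v x + A0.[x] * u x = 0]) ->
  (u s = 0 /\ v s = 0) <-> (u t = 0 /\ v t = 0).
Proof.
move=> st hyp.
pose M_at y := `|A1.[y] / A2.[y]| + `|A0.[y] / A2.[y]|.
have M_cont : {within `[s, t], continuous M_at}.
  apply: continuous_in_subspaceT => x; rewrite inE /= in_itv /= => hx.
  have [_ _ A2x _] := hyp x hx.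
  by apply: cvgD; apply: cvg_norm; apply: cvgM;
    do ?[apply: cvgV => //]; exact: continuous_horner.
have [c _ M_max] := EVT_max st M_cont.
pose E y := u y * u y + v y * v y.
have E_ge0 y : 0 <= E y by rewrite /E -!expr2 addr_ge0 // sqr_ge0.
have E_eq0 y : E y = 0 <-> u y = 0 /\ v y = 0.
  split => [|[uy vy]]; last by rewrite /E uy vy mul0r addr0.
  rewrite /E -!expr2 => /eqP; rewrite paddr_eq0 ?sqr_ge0 // !sqrf_eq0.
  by case/andP => /eqP -> /eqP ->.
have E_bound x : s <= x <= t -> `|2 * u x * v x + 2 * v x * z x| <= (1 + 3 * M_at c) * E x.
  move=> hx; have [_ _ A2x ode] := hyp x hx.
  have -> : z x = - (A1.[x] / A2.[x] * v x + A0.[x] / A2.[x] * u x).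
    have -> : z x = - (A1.[x] * v x + A0.[x] * u x) / A2.[x].
      by apply: (mulfI A2x); rewrite [RHS]mulrC divfK //; lra.
    by field.
  have Mx : M_at x <= M_at c by apply: M_max; rewrite in_itv.
  by apply: ode2_energy_bound; apply: le_trans Mx; rewrite /M_at ?lerDl ?lerDr.
rewrite -!E_eq0; apply: (energy_zero_propagates st _ E_bound E_ge0) => x hx.
have [du dv _ _] := hyp x hx.
by apply: trigger_derive; rewrite /GRing.scale /=; ring.
Qed.

Lemma ode2_zero_on_interval (A0 A1 A2 : {poly R}) (I : set R) (u v z : R -> R) (x0 : R) :
  is_interval I -> I x0 ->
  (forall x, I x ->
     [/\ is_derive x (1 : R) u (v x), is_derive x (1 : R) v (z x), A2.[x] != 0 &
         A2.[x] * z x + A1.[x] * v x + A0.[x] * u x = 0]) ->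
  u x0 = 0 -> v x0 = 0 -> forall x, I x -> u x = 0.
Proof.
move=> I_itv Ix0 hyp u0 v0 x Ix.
have on_segment s t : I s -> I t -> forall y, s <= y <= t -> _ :=
  fun Is It y hy => hyp y (I_itv s t Is It y hy).
case: (leP x0 x) => [x0x | /ltW xx0].
- by have /(ode2_zero_propagates x0x (on_segment _ _ Ix0 Ix)) [] : u x0 = 0 /\ v x0 = 0.
- by have /(ode2_zero_propagates xx0 (on_segment _ _ Ix Ix0)) [] : u x0 = 0 /\ v x0 = 0.
Qed.
End LinearODE.

Section RealAnalysis.
Variable R : realType.

Lemma open_ereal_itv (a b : \bar R) : open [set x : R | (a < x%:E < b)%E].
Proof.
rewrite openE => x /andP[ax xb].
have near_a : \forall y \near x, (a < y%:E)%E.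
  move: ax; case: a => [r||] //= ax; last by near=> y; exact: ltNyr.
  by rewrite lte_fin in ax; near=> y; rewrite lte_fin; near: y; exact: lt_nbhsr.
have near_b : \forall y \near x, (y%:E < b)%E.
  move: xb; case: b => [r||] //= xb; last by near=> y; exact: ltry.
  by rewrite lte_fin in xb; near=> y; rewrite lte_fin; near: y; exact: lt_nbhsl.
by near=> y; apply/andP; split; [near: y; exact: near_a | near: y; exact: near_b].
Unshelve. all: end_near.
Qed.

Lemma is_interval_ereal_itv (a b : \bar R) : is_interval [set x : R | (a < x%:E < b)%E].
Proof.
move=> s t /andP[sa _] /andP[_ tb] x /andP[sx xt]; apply/andP; split.
- by apply: lt_le_trans sa _; rewrite lee_fin.
- by apply: le_lt_trans tb; rewrite lee_fin.
Qed.

Lemma derivable1_continuous (f : R -> R) (x : R) :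
  derivable f x 1 -> {for x, continuous f}.
Proof. by move=> h; apply/differentiable_continuous/derivable1_diffP. Qed.

Lemma near_eq_continuous {T : topologicalType} (f g : T -> R) (x : T) :
  (\forall y \near x, f y = g y) -> {for x, continuous g} -> {for x, continuous f}.
Proof.
move=> fg g_cont; have fgx : f x = g x := nbhs_singleton fg.
apply: cvg_trans (_ : g @ x --> f x); last by rewrite fgx.
by apply: near_eq_cvg; near=> y; symmetry; near: y.
Unshelve. all: end_near.
Qed.

Lemma is_derive_quot (N D : R -> R) (x dN dD : R) : D x != 0 ->
  is_derive x (1 : R) N dN -> is_derive x (1 : R) D dD ->
  is_derive x (1 : R) (fun t => N t / D t) ((dN * D x - N x * dD) / D x ^+ 2).
Proof.
move=> Dx hN hD; have := is_deriveV Dx hD => ?.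
by apply: trigger_derive; rewrite /GRing.scale /=; field.
Qed.

Lemma quot_derivative_continuous {T : topologicalType} (N D dN dD : T -> R) (p : T) :
  D p != 0 -> {for p, continuous N} -> {for p, continuous D} ->
  {for p, continuous dN} -> {for p, continuous dD} ->
  {for p, continuous (fun q => (dN q * D q - N q * dD q) / D q ^+ 2)}.
Proof.
move=> Dp0 Nc Dc dNc dDc; apply: cvgM.
  by apply: cvgB; apply: cvgM.
by apply: cvgV; [rewrite sqrf_eq0 | exact: cvgM].
Qed.
End RealAnalysis.

Section FirstIntegral.
Variables (R : realType) (A0 A1 A2 : {poly R}) (g0 g1 : {poly {poly R}}) (I : set R).
Hypothesis I_open : open I.
Hypothesis A2_neq0 : forall x, I x -> A2.[x] != 0.

Definition fw (w : R -> R) : R * R -> R := lincombXY g1 g0 (derive1 w) w.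
Definition fw_x (w : R -> R) (p : R * R) : R :=
  lincombXY (dX g1) (dX g0) (derive1 w) w p
  + lincombXY g1 g0 (derive1 (derive1 w)) (derive1 w) p.
Definition fw_y (w : R -> R) : R * R -> R := lincombXY (dY g1) (dY g0) (derive1 w) w.

Section Solution.
Variable w : R -> R.
Hypothesis w_sol : ode_solution A0 A1 A2 I w.

Lemma sol_is_derive x : I x ->
  [/\ is_derive x (1 : R) w (derive1 w x),
      is_derive x (1 : R) (derive1 w) (derive1 (derive1 w) x) &
      A2.[x] * derive1 (derive1 w) x + A1.[x] * derive1 w x + A0.[x] * w x = 0].
Proof.
move=> Ix; have [dw ddw ode] := w_sol Ix.
split; last exact: ode.
  by have := derivableP dw; rewrite -derive1E.
by have := derivableP ddw; rewrite -derive1E.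
Qed.

Lemma sol_derive2E x : I x ->
  derive1 (derive1 w) x = - (A1.[x] * derive1 w x + A0.[x] * w x) / A2.[x].
Proof.
move=> Ix; have [_ _ ode] := sol_is_derive Ix.
by apply: (mulfI (A2_neq0 Ix)); rewrite [RHS]mulrC divfK ?A2_neq0 //; lra.
Qed.

Lemma sol_continuous x : I x ->
  [/\ {for x, continuous w}, {for x, continuous (derive1 w)} &
      {for x, continuous (derive1 (derive1 w))}].
Proof.
move=> Ix; have [dw ddw _] := w_sol Ix.
have w_cont := derivable1_continuous dw; have dw_cont := derivable1_continuous ddw.
split; [exact: w_cont | exact: dw_cont | apply: (near_eq_continuous
  (g := fun y => - (A1.[y] * derive1 w y + A0.[y] * w y) / A2.[y]))].
  have : \forall y \near x, I y by have := I_open; rewrite openE => /(_ x Ix).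
  by apply: filterS => y; exact: sol_derive2E.
apply: cvgM; last by apply: cvgV; [exact: A2_neq0 | exact: continuous_horner].
apply: cvgN; apply: cvgD; apply: cvgM; try exact: continuous_horner.
- exact: dw_cont.
- exact: w_cont.
Qed.

Lemma fw_continuous p : I p.1 -> {for p, continuous (fw w)}.
Proof.
by move=> Ip; have [? ? _] := sol_continuous Ip; exact: lincombXY_continuous.
Qed.

Lemma fw_x_continuous p : I p.1 -> {for p, continuous (fw_x w)}.
Proof.
move=> Ip; have [? ? ?] := sol_continuous Ip.
by apply: cvgD; exact: lincombXY_continuous.
Qed.

Lemma fw_y_continuous p : I p.1 -> {for p, continuous (fw_y w)}.
Proof.
by move=> Ip; have [? ? _] := sol_continuous Ip; exact: lincombXY_continuous.
Qed.

Lemma is_derive_fw_x x y : I x ->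
  is_derive x (1 : R) (fun t => fw w (t, y)) (fw_x w (x, y)).
Proof.
by move=> Ix; have [? ? _] := sol_is_derive Ix; exact: is_derive_lincombXY_x.
Qed.

Lemma is_derive_fw_y x y : is_derive y (1 : R) (fun t => fw w (x, t)) (fw_y w (x, y)).
Proof. exact: is_derive_lincombXY_y. Qed.
End Solution.

Section Quotient.
Variables w1 w2 : R -> R.
Hypotheses (w1_sol : ode_solution A0 A1 A2 I w1) (w2_sol : ode_solution A0 A1 A2 I w2).

Let U := [set p : R * R | I p.1 /\ fw w2 p != 0].
Let H (p : R * R) := fw w1 p / fw w2 p.
Let H_x (p : R * R) := (fw_x w1 p * fw w2 p - fw w1 p * fw_x w2 p) / fw w2 p ^+ 2.
Let H_y (p : R * R) := (fw_y w1 p * fw w2 p - fw w1 p * fw_y w2 p) / fw w2 p ^+ 2.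

Lemma open_U : open U.
Proof.
rewrite openE => p [Ip f2p].
have near_I : \forall q \near p, I q.1.
  by apply: cvg_fst; have := I_open; rewrite openE => /(_ p.1 Ip).
have near_f2 : \forall q \near p, fw w2 q != 0.
  exact: cvgr_neq0 (fw_continuous w2_sol Ip) f2p.
by near=> q; split; [near: q; exact: near_I | near: q; exact: near_f2].
Unshelve. all: end_near.
Qed.

Lemma is_derive_H_x p : U p -> is_derive p.1 (1 : R) (fun t => H (t, p.2)) (H_x p).
Proof.
case: p => x y [Ix f2p].
exact: (is_derive_quot (N := fun t => fw w1 (t, y)) (D := fun t => fw w2 (t, y)))
  f2p (is_derive_fw_x w1_sol y Ix) (is_derive_fw_x w2_sol y Ix).
Qed.

Lemma is_derive_H_y p : U p -> is_derive p.2 (1 : R) (fun t => H (p.1, t)) (H_y p).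
Proof.
case: p => x y [Ix f2p].
exact: (is_derive_quot (N := fun t => fw w1 (x, t)) (D := fun t => fw w2 (x, t)))
  f2p (is_derive_fw_y w1 x y) (is_derive_fw_y w2 x y).
Qed.

Lemma pdx_H p : U p -> pdx H p = H_x p.
Proof.
by move=> Up; rewrite /pdx derive1E; have := is_derive_H_x Up => ?; exact: derive_val.
Qed.

Lemma pdy_H p : U p -> pdy H p = H_y p.
Proof.
by move=> Up; rewrite /pdy derive1E; have := is_derive_H_y Up => ?; exact: derive_val.
Qed.

Lemma C1_on_H : C1_on U H.
Proof.
move=> p Up; have [Ip f2p] := Up.
have near_U : \forall q \near p, U q by move: open_U; rewrite openE => /(_ p Up).
have [f1c f2c] := (fw_continuous w1_sol Ip, fw_continuous w2_sol Ip).
split.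
- by have := is_derive_H_x Up => -[].
- by have := is_derive_H_y Up => -[].
- apply: (near_eq_continuous (g := H_x)); first exact: filterS pdx_H near_U.
  exact: quot_derivative_continuous f2p f1c f2c
    (fw_x_continuous w1_sol Ip) (fw_x_continuous w2_sol Ip).
- apply: (near_eq_continuous (g := H_y)); first exact: filterS pdy_H near_U.
  exact: quot_derivative_continuous f2p f1c f2c
    (fw_y_continuous w1_sol Ip) (fw_y_continuous w2_sol Ip).
Qed.

Lemma H_annihilated p : U p ->
  (Pfield A2 g0 g1).[p.1, p.2] * pdx H p
  + (Qfield A0 A1 A2 g0 g1).[p.1, p.2] * pdy H p = 0.
Proof.
move=> Up; rewrite pdx_H // pdy_H //; case: p Up => x y [/= Ix].
rewrite /H_x /H_y /fw_x /fw_y /fw /lincombXY /Pfield /Qfield /= => f2p.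
rewrite (sol_derive2E w1_sol Ix) (sol_derive2E w2_sol Ix).
rewrite !expr2 !(hornerD, hornerN, hornerM, horner_liftX, hornerC).
by field; rewrite f2p A2_neq0.
Qed.

Hypothesis I_itv : is_interval I.
Hypothesis w_indep : forall c1 c2 : R,
  (forall x, I x -> c1 * w1 x + c2 * w2 x = 0) -> c1 = 0 /\ c2 = 0.

Lemma lincomb_data_neq0 c x : I x ->
  (w1 x - c * w2 x != 0) || (derive1 w1 x - c * derive1 w2 x != 0).
Proof.
move=> Ix; rewrite -negb_and; apply/negP => /andP[/eqP u0 /eqP v0].
have w_eq0 : forall t, I t -> w1 t - c * w2 t = 0.
  apply: (ode2_zero_on_interval (A0 := A0) (A1 := A1) (A2 := A2)
    (v := fun t => derive1 w1 t - c * derive1 w2 t)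
    (z := fun t => derive1 (derive1 w1) t - c * derive1 (derive1 w2) t) I_itv Ix) => // t It.
  have [d1 dd1 e1] := sol_is_derive w1_sol It; have [d2 dd2 e2] := sol_is_derive w2_sol It.
  split; [exact: is_deriveB d1 (is_deriveZ c d2) | exact: is_deriveB dd1 (is_deriveZ c dd2) |
          exact: A2_neq0 |].
  have lin (a2 a1 a0 p2 p1 p0 q2 q1 q0 : R) :
      a2 * (p2 - c * q2) + a1 * (p1 - c * q1) + a0 * (p0 - c * q0) =
      (a2 * p2 + a1 * p1 + a0 * p0) - c * (a2 * q2 + a1 * q1 + a0 * q0) by ring.
  by rewrite lin e1 e2 mulr0 subr0.
have [/eqP] : (1 : R) = 0 /\ - c = 0.
  by apply: (@w_indep 1 (- c)) => t It; rewrite mul1r mulNr; exact: w_eq0.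
by rewrite oner_eq0.
Qed.

Lemma H_nonconstant : g1 * dY g0 - g0 * dY g1 != 0 ->
  forall V : set (R * R), open V -> V `<=` U -> V !=set0 ->
  exists p q, [/\ V p, V q & H p != H q].
Proof.
move=> D_neq0 V V_open VU [p0 Vp0].
have [//|H_const] := pselect (exists p q, [/\ V p, V q & H p != H q]).
have H_eq q : V q -> H q = H p0.
  by move=> Vq; apply/eqP/negP => /negP ne; apply: H_const; exists q, p0.
have [e e0 ballV] : nbhs_ball p0 V.
  by apply/nbhs_ballP; move: V_open; rewrite openE => /(_ p0 Vp0).
have V_box x y : `|x - p0.1| < e -> `|y - p0.2| < e -> V (x, y).
  by move=> hx hy; apply: ballV; split; rewrite /= -ball_normE /= distrC.
suff D_eq0 : g1 * dY g0 - g0 * dY g1 = 0 by rewrite D_eq0 eqxx in D_neq0.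
apply: (polyXY_eq0_on_ball (x0 := p0.1) e0) => x hx.
have Ix : I x by apply: (VU _ (V_box x p0.2 hx _)).1; rewrite subrr normr0.
apply: (wronskianY_eq0_of_comb (y0 := p0.2) e0 (lincomb_data_neq0 (H p0) Ix)) => y hy.
have Vxy := V_box x y hx hy; have f2_neq0 := (VU _ Vxy).2.
transitivity (fw w1 (x, y) - H p0 * fw w2 (x, y)); first by rewrite /fw /lincombXY /=; ring.
by rewrite -(H_eq _ Vxy) /H divfK // subrr.
Qed.
End Quotient.
End FirstIntegral.

Theorem mainTheorem3 (R : realType) (A0 A1 A2 : {poly R}) (a b : \bar R)
  (g0 g1 : {poly {poly R}}) (w1 w2 : R -> R) :
  A2 != 0 ->
  (forall x : R, (a < x%:E < b)%E -> A2.[x] != 0) ->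
  g1 != 0 ->
  g1 * dY g0 - g0 * dY g1 != 0 ->
  fundamental_system A0 A1 A2 [set x : R | (a < x%:E < b)%E] w1 w2 ->
  let f1 := fun p : R * R => g1.[p.1, p.2] * derive1 w1 p.1 - g0.[p.1, p.2] * w1 p.1 in
  let f2 := fun p : R * R => g1.[p.1, p.2] * derive1 w2 p.1 - g0.[p.1, p.2] * w2 p.1 in
  let U := [set p : R * R | (a < p.1%:E < b)%E /\ f2 p != 0] in
  open U /\
  first_integral (fun p => (Pfield A2 g0 g1).[p.1, p.2])
                 (fun p => (Qfield A0 A1 A2 g0 g1).[p.1, p.2])
                 U (fun p => f1 p / f2 p).
Proof.
move=> _ A2_neq0 _ D_neq0 [w1_sol w2_sol w_indep] f1 f2 U.
have I_open := @open_ereal_itv R a b; have I_itv := @is_interval_ereal_itv R a b.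
split; first exact: (open_U (g0 := g0) (g1 := g1) I_open A2_neq0 w2_sol).
split.
- exact: (C1_on_H (g0 := g0) (g1 := g1) I_open A2_neq0 w1_sol w2_sol).
- move=> p Up; exact (H_annihilated (g0 := g0) (g1 := g1) A2_neq0 w1_sol w2_sol Up).
- exact: (H_nonconstant A2_neq0 w1_sol w2_sol I_itv w_indep D_neq0).
Qed.
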